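(* Let $B\subset\mathbb{R}$ be a measurable set with Lebesgue measure $|B|=m\in(0,\infty)$, let $n\in\mathbb{N}$ and let $0<\delta<m/n$. Then there exist $x_1,\dots,x_{n+1}\in B$ such that $|x_i-x_j|/\delta\in\mathbb{N}=\{1,2,\dots\}$ for all $i\ne j$. *)

From HB Require Import structures.
From mathcomp Require Import all_boot all_order all_algebra.
From mathcomp Require Import all_classical all_reals all_analysis.

From HB Require Import structures.
From mathcomp Require Import all_boot all_order all_algebra.
From mathcomp Require Import all_classical all_reals all_analysis.
From mathcomp Require Import measurable_realfun lra.
Import Order.TTheory GRing.Theory Num.Theory.
Local Open Scope classical_set_scope.
Local Open Scope ring_scope.

(* Cut B into the pieces B ∩ [kδ, (k+1)δ) and translate each of them into
   [0, δ).  Since |B| > nδ, finitely many pieces already have total measure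
   > nδ; integrating the sum of the indicators of their translates over [0, δ)
   shows that some t lies in n + 1 of them, i.e. t + kδ ∈ B for n + 1 distinct
   integers k. *)

Lemma lebesgue_measure_preimage_addr (R : realType) (c : R) (A : set R) :
  measurable A ->
  lebesgue_measure ((fun x => x + c) @^-1` A) = lebesgue_measure A.
Proof.
have mshift : measurable_fun [set: measurableTypeR R]
    (fun x : measurableTypeR R => x + c : measurableTypeR R).
  exact: measurable_funD.
move=> mA; have /(_ mshift) pushE := @lebesgue_measure_unique R
  (pushforward lebesgue_measure (fun x : measurableTypeR R => x + c : measurableTypeR R)).
rewrite [RHS]pushE // => _ [[a b]] _ <-; rewrite /= /pushforward.
rewrite (_ : _ @^-1` _ = `](a - c), (b - c)]%classic); last first.
  by apply/seteqP; split => x /=; rewrite !in_itv /= ltrBlDr lerBrDr.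
rewrite !lebesgue_measure_itv /= !lte_fin ltrD2r.
by case: ifP => // _; rewrite -!EFinD opprB addrA subrK.
Qed.

Lemma measure_gt_window {R : realType}
    (mu : {measure set (measurableTypeR R) -> \bar R}) {B : set R} {k d : R} :
  measurable B -> 0 < d -> (k%:E < mu B)%E ->
  exists N : nat, (k%:E < mu (B `&` `[(- (N%:R * d))%R, (N%:R * d)%R[))%E.
Proof.
move=> mB d0 kB.
pose F (N : nat) := B `&` `[- (N%:R * d), N%:R * d[%classic.
have mF N : measurable (F N) by exact: measurableI.
have ndF : nondecreasing_seq F.
  move=> i j ij; apply/subsetPset => x [Bx]; rewrite /= !in_itv /= => /andP[xl xr].
  have ij' : i%:R * d <= j%:R * d by rewrite ler_pM2r // ler_nat.
  by split => //; rewrite /= in_itv /=; apply/andP; split; lra.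
have UF : \bigcup_N F N = B.
  apply/seteqP; split => [x [? _ []]//|x Bx].
  have := truncnS_gt (`|x| / d); rewrite ltr_pdivrMr // => xN.
  exists (Num.truncn (`|x| / d)).+1 => //; split => //=.
  have := ler_norm x; have := ler_norm (- x); rewrite normrN => xn nx.
  by rewrite in_itv /=; apply/andP; split; lra.
have ndmuF : nondecreasing_seq (mu \o F).
  by move=> i j ij; apply: le_measure; rewrite ?inE; [exact: mF..|exact/subsetPset/ndF].
have muB : mu B = ereal_sup (range (mu \o F)).
  apply: (cvg_unique _ _ (ereal_nondecreasing_cvgn ndmuF)); first exact: ereal_hausdorff.
  by rewrite /= -{1}UF; apply: nondecreasing_cvg_mu => //; rewrite UF.
by move: kB; rewrite muB => /ereal_sup_gt[_ [N _ <-] kN]; exists N.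
Qed.

Lemma sum_indic_card (T : Type) (R : pzRingType) (M : nat) (A : 'I_M -> set T) (t : T) :
  \sum_(j < M) (\1_(A j) t : R) = #|[set j | t \in A j]%SET|%:R.
Proof.
rewrite (eq_bigr (fun j => if j \in [set j | t \in A j]%SET then 1 else 0)); last first.
  by move=> j _; rewrite indicE inE; case: (t \in A j).
by rewrite -big_mkcond sumr_const.
Qed.

Lemma measure_pigeonhole {d} {T : measurableType d} {R : realType}
    (mu : {measure set T -> \bar R}) {D : set T} {c : R} {M n : nat}
    {A : 'I_M -> set T} :
  measurable D -> mu D = c%:E ->
  (forall j, measurable (A j)) -> (forall j, A j `<=` D) ->
  ((n%:R * c)%:E < \sum_(j < M) mu (A j))%E ->
  exists t, (n < #|[set j | t \in A j]%SET|)%N.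
Proof.
move=> mD muD mA AD; apply: contraPP => /forallNP small; apply/negP; rewrite -leNgt.
have indic_ge0 j t : (0 <= (\1_(A j) t : R)%:E)%E by rewrite lee_fin.
have mindic j : measurable_fun D (EFin \o (\1_(A j) : T -> R)).
  exact/measurable_EFinP/measurable_indic.
have -> : (\sum_(j < M) mu (A j) =
    \int[mu]_(t in D) (\sum_(j < M) (\1_(A j) t : R)%:E))%E.
  rewrite ge0_integral_sum //; apply: eq_bigr => j _.
  by rewrite integral_indic // setIidl.
rewrite EFinM -muD -integral_cst //; apply: ge0_le_integral => //.
- by move=> t _; exact: sume_ge0.
- exact: emeasurable_sum.
- by move=> t _; rewrite sumEFin sum_indic_card lee_fin ler_nat leqNgt; apply/negP.
Qed.

Lemma injection_of_card_gt (T : finType) (S : {set T}) (n : nat) :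
  (n < #|S|)%N -> exists f : 'I_n.+1 -> T, injective f /\ forall i, f i \in S.
Proof.
move=> nS; exists (fun i => enum_val (widen_ord nS i)); split.
- by move=> i j /enum_val_inj/(congr1 val) ij; apply: val_inj.
- by move=> i; exact: enum_valP.
Qed.

Lemma itv_lattice_slice (R : realType) (d x : R) (N : nat) : 0 < d ->
  - (N%:R * d) <= x < N%:R * d ->
  exists j : 'I_(N + N), (j%:R - N%:R) * d <= x < (j%:R - N%:R) * d + d.
Proof.
move=> d0 /andP[xl xr]; set y := (x + N%:R * d) / d.
have y0 : 0 <= y by apply: divr_ge0; lra.
have yN : (Num.truncn y < N + N)%N.
  by rewrite truncn_lt_nat // /y ltr_pdivrMr // natrD; lra.
exists (Ordinal yN) => /=; have /andP[yl yr] := truncn_itv y0.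
rewrite /y ler_pdivlMr // in yl; rewrite /y ltr_pdivrMr // -natr1 mulrDl mul1r in yr.
by rewrite mulrBl; apply/andP; split; lra.
Qed.

Lemma dist_lattice_translates (R : realType) (t c d : R) (a b : nat) : 0 < d ->
  `|(t + (a%:R - c) * d) - (t + (b%:R - c) * d)| / d = `|a - b|%N%:R.
Proof.
move=> d0; rewrite (_ : _ - _ = (a%:R - b%:R) * d); last by rewrite !mulrBl; lra.
by rewrite normrM (gtr0_norm d0) mulfK ?gt_eqF // natr_absz intr_norm intrB.
Qed.

Lemma lebesgue_lattice_translates_overlap {R : realType} {C : set R} {d : R}
    {N n : nat} :
  measurable C -> 0 < d -> C `<=` `[- (N%:R * d), N%:R * d[ ->
  ((n%:R * d)%:E < lebesgue_measure C)%E ->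
  exists t : R, (n < #|[set j : 'I_(N + N) | (t + (j%:R - N%:R) * d)%R \in C]%SET|)%N.
Proof.
move=> mC d0 CW muC; pose o (j : nat) := (j%:R - N%:R) * d.
pose slice j := C `&` `[o j, o j + d[.
pose A j := (fun x => x + o j) @^-1` slice j.
have mslice j : measurable (slice j) by exact: measurableI.
have mA j : measurable (A j).
  by rewrite -[A j]setTI; exact: measurable_funD.
have A01 j : A j `<=` `[0, d[.
  by move=> x [_]; rewrite /= !in_itv /= => /andP[? ?]; apply/andP; split; lra.
have Cslices : C `<=` \big[setU/set0]_(j < N + N) slice j.
  move=> x Cx; rewrite -bigcup_mkord.
  have /itv_lattice_slice[//|j jx] : - (N%:R * d) <= x < N%:R * d.
    by have := CW x Cx; rewrite /= in_itv.
  by exists j; [exact: ltn_ord|split; rewrite //= in_itv].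
have muA : ((n%:R * d)%:E < \sum_(j < N + N) lebesgue_measure (A j))%E.
  apply: (lt_le_trans muC); under eq_bigr do rewrite lebesgue_measure_preimage_addr //.
  exact: (content_subadditive lebesgue_measure (fun j _ => mslice j) mC Cslices).
have mu01 : lebesgue_measure `[0, d[%classic = d%:E.
  by rewrite lebesgue_measure_itv /= lte_fin d0 -EFinD subr0.
have [t tA] := measure_pigeonhole lebesgue_measure (measurable_itv _) mu01
  (fun j => mA j) (fun j => A01 j) muA.
exists t; apply: leq_trans tA (subset_leq_card _); apply/fintype.subsetP => j.
by rewrite !inE => -[].
Qed.

Theorem lemma9 (R : realType) (B : set R) (m : R) (n : nat) (delta : R)
  (hB : measurable B) (hBm : (lebesgue_measure B = m%:E)%E) (hm : 0 < m)
  (hn : (0 < n)%N) (hd0 : 0 < delta) (hd : delta < m / n%:R) :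
  exists x : 'I_n.+1 -> R,
    (forall i, B (x i)) /\
    (forall i j : 'I_n.+1, i != j ->
       exists k : nat, (0 < k)%N /\ `|x i - x j| / delta = k%:R).
Proof.
have nB : ((n%:R * delta)%:E < lebesgue_measure B)%E.
  by rewrite hBm lte_fin mulrC -ltr_pdivlMr ?ltr0n.
have [N] := measure_gt_window lebesgue_measure hB hd0 nB.
set C := B `&` _ => nC.
have mC : measurable C by exact: measurableI.
have [t] := lebesgue_lattice_translates_overlap mC hd0 (@subIsetr _ _ _) nC.
case/injection_of_card_gt => J [Jinj JC].
exists (fun i => t + ((J i)%:R - N%:R) * delta); split.
- by move=> i; have := JC i; rewrite inE => /set_mem[].
- move=> i j ij; exists `|J i - J j|%N; split; last exact: dist_lattice_translates.
  by rewrite lt0n distn_eq0; apply: contra ij => /eqP/val_inj/Jinj/eqP.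
Qed.
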